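(* Let $F$ be a finite field with $q=|F|$. Let $r,m,n\in\mathbb{N}$ satisfy $r\le m$ and $r\le n$. Then the number of $(m+n+1)$-tuples $x\in F^{m+n+1}$ satisfying $\operatorname{rank}(H_{m,n}(x))\le r$ is $q^{2r}$.
   Context: $\mathbb{N}=\{0,1,2,\ldots\}$. For $N\in\mathbb{N}$, $x=(x_0,\ldots,x_N)\in F^{N+1}$ and integers $p,p'\ge -1$ with $p+p'\le N$, the Hankel matrix $H_{p,p'}(x)$ is the $(p+1)\times(p'+1)$ matrix $(x_{i+j})_{0\le i\le p,\,0\le j\le p'}$. *)

From mathcomp Require Import all_boot all_order all_algebra.
Set Implicit Arguments. Unset Strict Implicit. Unset Printing Implicit Defensive.
Import GRing.Theory.
Local Open Scope ring_scope.

Definition hankel (T : Type) (p p' : nat) (x : 'I_(p + p').+1 -> T)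
  : 'M[T]_(p.+1, p'.+1) :=
  \matrix_(i < p.+1, j < p'.+1) x (inord (i + j)).

From mathcomp Require Import all_boot all_order all_algebra zify.
From mathcomp Require Import mxabelem.
Set Implicit Arguments. Unset Strict Implicit. Unset Printing Implicit Defensive.
Import GRing.Theory.
Local Open Scope ring_scope.

(* Fix x = (x_0, ..., x_N) with N = m + n and write H_{p,p'} for its Hankel
   matrices (p + p' = N).
   1. Shift lemma: for r <= p, p', rank H_{p,p'+1} <= r iff rank H_{p+1,p'} <= r.
      If the first rows of H_{p+1,p'} already have rank r, the last row of
      H_{p',p+1} depends on the previous ones, i.e. x satisfies a linear
      recurrence; the windows (x_i, ..., x_{i+p'}) are then obtained from each
      other by a fixed companion matrix, so their span stops growing as soon as
      it stalls once.  Iterating, rank H_{m,n} <= r iff rank H_{r,N-r} <= r.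
   2. Counting kernels: K_s(x) := #{u | u H_{s,N-s}(x) = 0} = q^(s+1-rank).  For
      u <> 0 the map x |-> u H_{s,N-s}(x) is onto, its transpose being
      multiplication by the nonzero polynomial u; hence, exchanging sums,
      sum_x K_s(x) = q^(N+1) + (q^(s+1) - 1) q^s.
   3. By the shift lemma, K_{s+1} + q = q K_s + 1 + (q-1)[rank H_{s+1} <= s+1]
      pointwise when 2s+2 <= N, and K_0 = 1 + (q-1)[rank H_0 <= 0].  Summing
      over x gives (q-1) #{x | rank H_{r,N-r}(x) <= r} = (q-1) q^(2r). *)

Section HankelShift.
Variables (F : fieldType) (X : nat -> F).

Definition hankel_seq p p' : 'M[F]_(p.+1, p'.+1) :=
  \matrix_(i < p.+1, j < p'.+1) X (i + j)%N.

Lemma tr_hankel_seq p p' : (hankel_seq p p')^T = hankel_seq p' p.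
Proof. by apply/matrixP => i j; rewrite !mxE addnC. Qed.

Definition window l i : 'rV[F]_l.+1 := \row_(j < l.+1) X (i + j)%N.

Definition windows l k : 'M[F]_l.+1 := (\sum_(i < k) <<window l i>>)%MS.

Lemma window_sub l k i : (i < k)%N -> (window l i <= windows l k)%MS.
Proof. by move=> ik; rewrite (sumsmx_sup (Ordinal ik)) // genmxE. Qed.

Lemma windows_subP l k p (A : 'M_(p, l.+1)) :
  (forall i, (i < k)%N -> (window l i <= A)%MS) -> (windows l k <= A)%MS.
Proof. by move=> sA; apply/sumsmx_subP => i _; rewrite genmxE sA. Qed.

Lemma windowsS l k1 k2 : (k1 <= k2)%N -> (windows l k1 <= windows l k2)%MS.
Proof.
by move=> le12; apply: windows_subP => i ik; apply/window_sub/(leq_trans ik).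
Qed.

Lemma rank_windowsS l k : (\rank (windows l k.+1) <= (\rank (windows l k)).+1)%N.
Proof.
rewrite /windows big_ord_recr /=; apply: leq_trans (mxrank_adds_leqif _ _).1 _.
by rewrite mxrank_gen -[X in (_ <= X)%N]addn1 leq_add2l rank_leq_row.
Qed.

Lemma hankel_seq_windows p l : (hankel_seq p l :=: windows l p.+1)%MS.
Proof.
have rowE i : row i (hankel_seq p l) = window l i by apply/rowP => j; rewrite !mxE.
apply/eqmxP/andP; split.
  by apply/row_subP => i; rewrite rowE window_sub.
by apply: windows_subP => i ip; rewrite -[i]/(val (Ordinal ip)) -rowE row_sub.
Qed.

(* A linear recurrence of order m+1 valid up to index m+1+n makes the shift of
   windows of length m+1 a linear map, given by the companion matrix. *)
Lemma companion_shift m n (a : 'rV[F]_m.+1) :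
    (forall j, (j <= n)%N -> X (m.+1 + j)%N = \sum_(i < m.+1) a 0 i * X (i + j)%N) ->
  exists M : 'M[F]_m.+1, forall i, (i <= n)%N -> window m i *m M = window m i.+1.
Proof.
move=> rec.
exists (\matrix_(k, l) if (l < m)%N then ((k : nat) == l.+1)%:R else a 0 k).
move=> i le_in; apply/rowP => l; rewrite !mxE.
have [lt_lm | le_ml] := ltnP l m.
  rewrite (bigD1 (Ordinal (lt_lm : (l.+1 < m.+1)%N))) //= big1 => [|k nk].
    by rewrite !mxE /= lt_lm eqxx mulr1 addr0 addnS addSn.
  rewrite !mxE /= lt_lm; case: eqP => [ek|_]; last by rewrite mulr0.
  by case/eqP: nk; apply: val_inj.
have -> : (l : nat) = m by apply/eqP; rewrite eqn_leq le_ml -ltnS ltn_ord.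
rewrite addSn -addnC rec //; apply: eq_bigr => k _.
by rewrite !mxE /= ltnNge le_ml mulrC addnC.
Qed.

Lemma windows_closed l n k (M : 'M[F]_l.+1) :
    (forall i, (i <= n)%N -> window l i *m M = window l i.+1) ->
    (k <= n)%N -> (window l k <= windows l k)%MS ->
  (windows l n.+2 <= windows l k)%MS.
Proof.
move=> shift le_kn wk.
have stable : (windows l k *m M <= windows l k)%MS.
  rewrite /windows sumsmxMr; apply/sumsmx_subP => i _.
  rewrite (eqmxMr _ (genmxE _)) shift; last exact: leq_trans (ltnW (ltn_ord i)) le_kn.
  have [ik | ki] := ltnP i.+1 k; first exact: window_sub.
  by have -> : i.+1 = k by apply/eqP; rewrite eqn_leq ki ltn_ord.
have from_k t : (k + t <= n.+1)%N -> (window l (k + t) <= windows l k)%MS.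
  elim: t => [|t IH] le_tn; first by rewrite addn0.
  rewrite addnS -shift; last by rewrite -ltnS -addnS.
  by apply: submx_trans stable; apply/submxMr/IH/ltnW; rewrite -addnS.
apply: windows_subP => i ii; have [ik | ki] := ltnP i k; first exact: window_sub.
by rewrite -(subnKC ki); apply: from_k; rewrite subnKC.
Qed.

Lemma nondecreasing_stall (f : nat -> nat) n :
    f 0%N = 0%N -> (forall k, f k <= f k.+1)%N -> (f n.+1 <= n)%N ->
  exists2 k, (k <= n)%N & f k.+1 = f k.
Proof.
move=> f0 f_mono f_n.
have [/existsP [k /eqP eq_k] | /existsPn strict] :=
  boolP [exists k : 'I_n.+1, f k.+1 == f k].
  by exists k; rewrite // -ltnS.
have grow k : (k <= n.+1)%N -> (k <= f k)%N.
  elim: k => [|k IH] lt_kn; first by [].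
  apply: leq_ltn_trans (IH (ltnW lt_kn)) _.
  by rewrite ltn_neqAle f_mono eq_sym (strict (Ordinal lt_kn)).
by have := grow _ (leqnn n.+1); rewrite leqNgt ltnS f_n.
Qed.

Lemma rank_hankel_seq_tr p p' : \rank (hankel_seq p p') = \rank (hankel_seq p' p).
Proof. by rewrite -mxrank_tr tr_hankel_seq. Qed.

Lemma hankel_shift_down m n r : (r <= m)%N -> (r <= n)%N ->
  (\rank (hankel_seq n m.+1) <= r)%N -> (\rank (hankel_seq n.+1 m) <= r)%N.
Proof.
move=> le_rm le_rn rank_r.
have rank_windows p l : \rank (hankel_seq p l) = \rank (windows l p.+1).
  by rewrite (hankel_seq_windows p l).
have sub_mn : (hankel_seq m n <= hankel_seq m.+1 n)%MS.
  by rewrite !hankel_seq_windows windowsS.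
have le_rank_nm : (\rank (hankel_seq n m) <= r)%N.
  by rewrite rank_hankel_seq_tr (leq_trans (mxrankS sub_mn)) // -rank_hankel_seq_tr.
rewrite rank_windows; have [lt_r | ge_r] := ltnP (\rank (windows m n.+1)) r.
  exact: leq_trans (rank_windowsS _ _) lt_r.
have eq_r : \rank (windows m n.+1) = r.
  by apply/eqP; rewrite eqn_leq ge_r -rank_windows le_rank_nm.
have sub_nm : (hankel_seq m.+1 n <= hankel_seq m n)%MS.
  rewrite -(mxrank_leqif_sup sub_mn).2 eqn_leq (mxrankS sub_mn) /=.
  by rewrite rank_hankel_seq_tr (leq_trans rank_r) // -eq_r -rank_windows rank_hankel_seq_tr.
have /submxP [a row_a] : (row ord_max (hankel_seq m.+1 n) <= hankel_seq m n)%MS.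
  exact: submx_trans (row_sub _ _) sub_nm.
have [M shiftM] : exists M : 'M[F]_m.+1,
    forall i, (i <= n)%N -> window m i *m M = window m i.+1.
  apply: (companion_shift (a := a)) => j le_jn.
  have := congr1 (fun v : 'rV[F]_n.+1 => v 0 (Ordinal (le_jn : (j < n.+1)%N))) row_a.
  by rewrite !mxE /= => ->; apply: eq_bigr => i _; rewrite mxE.
have [k le_kn stall_k] : exists2 k, (k <= n)%N &
    \rank (windows m k.+1) = \rank (windows m k).
  apply: (nondecreasing_stall (f := fun k => \rank (windows m k))) => /=.
  - by rewrite /windows big_ord0 mxrank0.
  - by move=> k; rewrite mxrankS // windowsS.
  - by rewrite eq_r.
have window_k : (window m k <= windows m k)%MS.
  have sub_k := windowsS m (leqnSn k).
  by rewrite (submx_trans (window_sub m (ltnSn k))) // -(mxrank_leqif_sup sub_k).2 stall_k.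
rewrite (leq_trans (mxrankS (windows_closed shiftM le_kn window_k))) //.
by rewrite -eq_r mxrankS // windowsS // ltnW.
Qed.

(* The shift lemma; the converse direction follows by transposition. *)
Lemma hankel_shift m n r : (r <= m)%N -> (r <= n)%N ->
  (\rank (hankel_seq n m.+1) <= r)%N = (\rank (hankel_seq n.+1 m) <= r)%N.
Proof.
move=> le_rm le_rn; apply/idP/idP; first exact: hankel_shift_down.
by rewrite rank_hankel_seq_tr => /(hankel_shift_down le_rn le_rm); rewrite rank_hankel_seq_tr.
Qed.

Lemma hankel_rank_normal m n r : (r <= m)%N -> (r <= n)%N ->
  (\rank (hankel_seq m n) <= r)%N = (\rank (hankel_seq r (m + n - r)) <= r)%N.
Proof.
move=> le_rm; rewrite -(subnKC le_rm) -addnA addKn; elim: (m - r)%N n => [|d IH] n le_rn.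
  by rewrite addn0.
by rewrite addnS -hankel_shift ?leq_addr // IH ?addnS // leqW.
Qed.

End HankelShift.

Section Convolution.
Variable R : fieldType.

Definition conv_mx d e (p : {poly R}) : 'M[R]_(d, e) :=
  lin1_mx (poly_rV \o p \o* rVpoly).
Arguments conv_mx : clear implicits.

Lemma mul_conv_mx d e (p : {poly R}) (w : 'rV_d) :
  w *m conv_mx d e p = poly_rV (rVpoly w * p).
Proof. by rewrite mul_rV_lin1. Qed.

Lemma conv_mxE d e (p : {poly R}) (j : 'I_d) (k : 'I_e) :
  conv_mx d e p j k = p`_(k - j) *+ (j <= k)%N.
Proof.
by rewrite !mxE /= rVpoly_delta coefXnM ltnNge if_neg -mulrb.
Qed.

Lemma row_free_conv_mx d e (p : {poly R}) :
  p != 0 -> (d + (size p).-1 <= e)%N -> row_free (conv_mx d e p).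
Proof.
move=> p_neq0 le_de; apply: inj_row_free => w; rewrite mul_conv_mx => prod0.
have size_prod : (size (rVpoly w * p)%R <= e)%N.
  have size_w : (size (rVpoly w) <= d)%N by apply: size_poly.
  by apply: leq_trans (size_polyMleq _ _) _; lia.
have /eqP : rVpoly w * p = 0 by rewrite -(poly_rV_K size_prod) prod0 linear0.
by rewrite mulf_eq0 (negbTE p_neq0) orbF => /eqP w0; rewrite -[w]rVpolyK w0 linear0.
Qed.

Lemma hankel_seq_conv N s (u : 'rV[R]_s.+1) (v : 'rV[R]_N.+1) : (s <= N)%N ->
  u *m hankel_seq (fun k => v 0 (inord k)) s (N - s) =
  v *m (conv_mx (N - s).+1 N.+1 (rVpoly u))^T.
Proof.
move=> le_sN; apply/rowP => j; rewrite !mxE.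
pose G k := v 0 (inord k) * ((rVpoly u)`_(k - j) *+ (j <= k)%N).
have -> : \sum_(k < N.+1) v 0 k * (conv_mx (N - s).+1 N.+1 (rVpoly u))^T k j =
          \sum_(0 <= k < N.+1) G k.
  by rewrite big_mkord; apply: eq_bigr => k _; rewrite [_^T k j]mxE conv_mxE /G inord_val.
have lt_j := ltn_ord j.
have le_jN : (j <= N.+1)%N by lia.
rewrite (big_cat_nat (leq0n j) le_jN) /=.
have -> : \sum_(0 <= k < j) G k = 0.
  by rewrite big_nat big1 // => k /andP[_ lt_kj]; rewrite /G leqNgt lt_kj mulr0.
have := big_addn 0 N.+1 j xpredT G; rewrite add0n add0r => ->.
have le_sNj : (s.+1 <= N.+1 - j)%N by lia.
rewrite (big_cat_nat (leq0n _) le_sNj) /=.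
have -> : \sum_(s.+1 <= i < N.+1 - j) G (i + j)%N = 0.
  rewrite big_nat big1 // => i /andP[le_si _].
  rewrite /G addnK leq_addl nth_default ?mulr0n ?mulr0 //.
  exact: leq_trans (size_poly _ _) le_si.
rewrite addr0 big_mkord; apply: eq_bigr => i _.
by rewrite /G addnK leq_addl mulr1n coef_rVpoly_ord !mxE mulrC.
Qed.

End Convolution.

Section Counting.
Variable F : finFieldType.
Local Notation q := #|F|.

Lemma card_gt1 : (1 < q)%N.
Proof. exact: card_finNzRing_gt1. Qed.

Lemma card_left_kernel m n (A : 'M[F]_(m, n)) :
  #|[set u : 'rV[F]_m | u *m A == 0]| = (q ^ (m - \rank A))%N.
Proof.
by rewrite -mxrank_ker -card_rowg; apply: eq_card => u; rewrite inE mem_rowg sub_kermx.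
Qed.

Lemma sum_indicator (T : finType) (P : pred T) :
  (\sum_(x : T) (P x : nat))%N = #|[set x | P x]|.
Proof. by rewrite -sum1dep_card [RHS]big_mkcond; apply: eq_bigr => x _; case: (P x). Qed.

Variable N : nat.

Definition seq_of (v : 'rV[F]_N.+1) (k : nat) : F := v 0 (inord k).

Definition hankel_rows s (v : 'rV[F]_N.+1) : 'M[F]_(s.+1, (N - s).+1) :=
  hankel_seq (seq_of v) s (N - s).

Definition hankel_rank s (v : 'rV[F]_N.+1) : nat := \rank (hankel_rows s v).

Definition kernel_count s (v : 'rV[F]_N.+1) : nat :=
  #|[set u : 'rV[F]_s.+1 | u *m hankel_rows s v == 0]|.

Lemma kernel_countE s v : kernel_count s v = (q ^ (s.+1 - hankel_rank s v))%N.
Proof. exact: card_left_kernel. Qed.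

Lemma card_hankel_solutions s (u : 'rV[F]_s.+1) : (s <= N)%N -> u != 0 ->
  #|[set v : 'rV[F]_N.+1 | u *m hankel_rows s v == 0]| = (q ^ s)%N.
Proof.
move=> le_sN u_neq0; set C := conv_mx (N - s).+1 N.+1 (rVpoly u).
have -> : [set v | u *m hankel_rows s v == 0] = [set v | v *m C^T == 0].
  by apply/setP => v; rewrite !inE /hankel_rows hankel_seq_conv.
have pu_neq0 : rVpoly u != 0.
  by apply: contraNneq u_neq0 => pu0; rewrite -[u]rVpolyK pu0 linear0.
have /eqP rank_C : row_free C.
  apply: row_free_conv_mx pu_neq0 _.
  have : (size (rVpoly u) <= s.+1)%N by apply: size_poly.
  move: (size _) => z; rewrite -subn1; lia.
by rewrite card_left_kernel mxrank_tr rank_C subSS subKn.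
Qed.

(* Double counting the pairs (u, v) with u H_s(v) = 0. *)
Lemma sum_kernel_count s : (s <= N)%N ->
  (\sum_(v : 'rV[F]_N.+1) kernel_count s v + q ^ s = q ^ N.+1 + q ^ s.+1 * q ^ s)%N.
Proof.
move=> le_sN.
have -> : (\sum_(v : 'rV[F]_N.+1) kernel_count s v =
    \sum_(u : 'rV[F]_s.+1) #|[set v : 'rV[F]_N.+1 | u *m hankel_rows s v == 0%R]|)%N.
  rewrite /kernel_count; under eq_bigr do rewrite -sum1dep_card big_mkcond.
  by rewrite exchange_big; apply: eq_bigr => u _; rewrite -sum1dep_card [RHS]big_mkcond.
rewrite (bigD1 0) //=.
under eq_bigr => u u_neq0 do rewrite card_hankel_solutions //.
rewrite (@eq_card _ _ [set: 'rV[F]_N.+1]) => [|v]; last by rewrite !inE mul0mx eqxx.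
rewrite cardsT sum_nat_const cardC1 !card_mx !mul1n -addnA -mulSnr prednK //.
by rewrite expn_gt0 (ltn_trans _ card_gt1).
Qed.

Lemma hankel_rank_le s v : (hankel_rank s v <= s.+1)%N.
Proof. exact: rank_leq_row. Qed.

Lemma hankel_rank_next s r v : (2 * s + 2 <= N)%N -> (r <= s)%N ->
  (hankel_rank s.+1 v <= r)%N = (hankel_rank s v <= r)%N.
Proof.
move=> le_sN le_rs; rewrite /hankel_rank /hankel_rows.
have lt_sN : (s < N)%N by lia.
by rewrite -(subnSK lt_sN) -hankel_shift //; lia.
Qed.

Lemma hankel_rank_stable s v : (2 * s + 2 <= N)%N -> (hankel_rank s v <= s)%N ->
  hankel_rank s.+1 v = hankel_rank s v.
Proof.
move=> le_sN le_rs.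
have le_next : (hankel_rank s.+1 v <= hankel_rank s v)%N by rewrite hankel_rank_next.
apply/eqP; rewrite eqn_leq le_next -hankel_rank_next ?leqnn //.
exact: leq_trans le_next le_rs.
Qed.

Lemma hankel_rank_full s v : (2 * s + 2 <= N)%N -> (s < hankel_rank s v)%N ->
  (s < hankel_rank s.+1 v)%N.
Proof. by move=> le_sN; rewrite !ltnNge hankel_rank_next. Qed.

Lemma kernel_count0 v :
  kernel_count 0 v = (1 + (q - 1) * (hankel_rank 0 v <= 0))%N.
Proof.
rewrite kernel_countE; have := hankel_rank_le 0 v; have := card_gt1.
case: (hankel_rank 0 v) => [|[|k]] //= q_gt1 _.
  by rewrite subn0 expn1 muln1 addnC subnK // ltnW.
by rewrite subnn expn0 muln0.
Qed.

Lemma kernel_countS s v : (2 * s + 2 <= N)%N ->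
  (kernel_count s.+1 v + q = q * kernel_count s v + 1 +
     (q - 1) * (hankel_rank s.+1 v <= s.+1))%N.
Proof.
move=> le_sN; rewrite !kernel_countE; have q_gt1 := card_gt1.
have [le_rs | lt_sr] := leqP (hankel_rank s v) s.
  rewrite hankel_rank_stable // (leq_trans le_rs) // subSn ?expnS; last exact: leqW.
  by rewrite muln1 -addnA subnKC // ltnW.
have lt_next := hankel_rank_full le_sN lt_sr.
have -> : hankel_rank s v = s.+1 by apply/eqP; rewrite eqn_leq hankel_rank_le.
have le_next := hankel_rank_le s.+1 v; rewrite subnn muln1.
have [le_s1 | gt_s1] := leqP (hankel_rank s.+1 v) s.+1.
  have -> : hankel_rank s.+1 v = s.+1 by apply/eqP; rewrite eqn_leq le_s1.
  by rewrite subSn // subnn expn1 muln1; lia.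
have -> : hankel_rank s.+1 v = s.+2 by apply/eqP; rewrite eqn_leq le_next.
by rewrite subnn expn0 muln0; lia.
Qed.

Lemma sum_const_rV c : (\sum_(v : 'rV[F]_N.+1) c = q ^ N.+1 * c)%N.
Proof. by rewrite sum_nat_const card_mx mul1n. Qed.

Lemma card_low_rank r : (2 * r <= N)%N ->
  #|[set v : 'rV[F]_N.+1 | (hankel_rank r v <= r)%N]| = (q ^ (2 * r))%N.
Proof.
move=> le_rN; have q_gt1 := card_gt1.
rewrite -sum_indicator; set T := (\sum_v _)%N.
(* It suffices to show (q - 1) T = (q - 1) q^(2r), as q - 1 > 0. *)
apply/eqP; rewrite -(eqn_pmul2l (_ : 0 < q - 1)%N) ?subn_gt0 //; apply/eqP.
case: r le_rN @T => [|s] le_rN T.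
  have := sum_kernel_count (leq0n N).
  under eq_bigr do rewrite kernel_count0.
  by rewrite big_split /= sum_const_rV -big_distrr /= -/T muln1 expn0 muln1 expn1; nia.
have lt_sN : (s < N)%N by lia.
have sum0 := sum_kernel_count (ltnW lt_sN); have sum1 := sum_kernel_count lt_sN.
have sumS : (\sum_v (kernel_count s.+1 v + q) =
    \sum_v (q * kernel_count s v + 1 + (q - 1) * (hankel_rank s.+1 v <= s.+1)))%N.
  by apply: eq_bigr => v _; rewrite kernel_countS //; lia.
rewrite !big_split /= !sum_const_rV -!big_distrr /= muln1 -/T in sumS.
move: sum0 sum1 sumS; rewrite mul2n -addnn expnD.
move: (\sum_v kernel_count s v)%N (\sum_v kernel_count s.+1 v)%N (q ^ N.+1)%N => S0 S1 Q.
rewrite !expnS; move: (q ^ s)%N q_gt1 => a.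
case: q => // p _; rewrite subSS subn0; nia.
Qed.

End Counting.

Theorem theorem1 (F : finFieldType) (r m n : nat) (hrm : (r <= m)%N) (hrn : (r <= n)%N) :
  #|[set x : {ffun 'I_(m + n).+1 -> F} | (\rank (hankel x) <= r)%N]| = (#|F| ^ (2 * r))%N.
Proof.
pose vec (x : {ffun 'I_(m + n).+1 -> F}) : 'rV[F]_(m + n).+1 := \row_i x i.
have vec_bij : bijective vec.
  exists (fun v : 'rV[F]_(m + n).+1 => [ffun i => v 0 i]) => [x | v].
    by apply/ffunP => i; rewrite ffunE mxE.
  by apply/rowP => i; rewrite mxE ffunE.
have rank_vec (x : {ffun 'I_(m + n).+1 -> F}) :
    (\rank (hankel x) <= r)%N = (hankel_rank r (vec x) <= r)%N.
  have -> : hankel x = hankel_seq (seq_of (vec x)) m n.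
    by apply/matrixP => i j; rewrite !mxE /seq_of /vec mxE.
  exact: hankel_rank_normal.
rewrite -(@card_low_rank F (m + n)); last lia.
rewrite -(on_card_preimset (onW_bij _ vec_bij)); apply: eq_card => x.
by rewrite !inE rank_vec.
Qed.
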